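(* Let $k$ be a positive integer and $p=t=\frac{k+1}{k+2}$. If $k>1$, bold play is optimal, i.e. $\pi(p,p)=p$. If $k=1$ (so $p=t=\frac23$), the stake sequence $c_1=c_2=c_3=\frac13$, $c_i=0$ for $i\ge4$, is optimal, i.e. $\pi(\frac23,\frac23)=\mathbf P(c_1\beta_1+c_2\beta_2+c_3\beta_3\ge\frac23)$ for these $c_i$.
   Context: Let $\beta_1,\beta_2,\ldots$ be independent Bernoulli random variables with success probability $p$. A stake sequence is a sequence $\gamma=(c_1,c_2,\ldots)$ of non-negative reals with $c_1\ge c_2\ge\cdots$ and $\sum_i c_i=1$; write $S_\gamma=\sum_i c_i\beta_i$. For $0\le p\le t\le 1$ define $\pi(p,t)=\sup\{\mathbf P(S_\gamma\ge t)\mid \gamma \text{ a stake sequence}\}$. Bold play for threshold $t$ is the stake sequence with $c_i=\frac1m$ for $i\le m$ and $c_i=0$ for $i>m$, where $m=\lfloor 1/t\rfloor$; it is optimal if it attains $\pi(p,t)$. For $t>\frac12$ bold play is $c_1=1$, with success probability $p$. *)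

From HB Require Import structures.
From mathcomp Require Import all_boot all_order all_algebra.
From mathcomp Require Import all_classical all_reals all_analysis.
Set Implicit Arguments. Unset Strict Implicit. Unset Printing Implicit Defensive.
Import Order.TTheory GRing.Theory Num.Theory.
Import numFieldNormedType.Exports.
Local Open Scope classical_set_scope.
Local Open Scope ring_scope.

(* Stake sequence (0-indexed: c 0 = c_1, c 1 = c_2, ...):
   non-negative, non-increasing, with sum 1. *)
Definition stake_seq (R : realType) (c : nat -> R) : Prop :=
  (forall i, 0 <= c i) /\ (forall i, c i.+1 <= c i) /\
  (series c @ \oo --> (1 : R)).

Definition S_stake (R : realType) (T : Type) (c : nat -> R)
  (beta : nat -> T -> R) (w : T) : R :=
  limn (series (fun i => c i * beta i w)).

Definition bernoulli_rv (d : measure_display) (T : measurableType d)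
  (R : realType) (P : probability T R) (p : R) (X : T -> R) : Prop :=
  measurable_fun setT X /\ (forall w, X w = 0 \/ X w = 1) /\
  P (X @^-1` [set 1]) = p%:E.

Definition mutually_independent (d : measure_display) (T : measurableType d)
  (R : realType) (P : probability T R) (X : nat -> T -> R) : Prop :=
  forall (s : seq nat) (B : nat -> set R), uniq s ->
    (forall i, measurable (B i)) ->
    P (\big[setI/setT]_(i <- s) (X i @^-1` B i)) =
    (\prod_(i <- s) P (X i @^-1` B i))%E.

(* beta_1, beta_2, ... independent Bernoulli(p) (0-indexed). *)
Definition iid_bernoulli (d : measure_display) (T : measurableType d)
  (R : realType) (P : probability T R) (p : R) (beta : nat -> T -> R) : Prop :=
  (forall i, bernoulli_rv P p (beta i)) /\ mutually_independent P beta.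

Definition pi_stake (d : measure_display) (T : measurableType d)
  (R : realType) (P : probability T R) (beta : nat -> T -> R) (t : R) : \bar R :=
  ereal_sup [set P [set w | t <= S_stake c beta w] | c in [set c | stake_seq c]].

(* Write n = k + 2, so that p = t = 1 - 1/n.  Up to the tail of the stake sequence,
   S >= t means that the stakes lost, each independently with probability 1/n, add up to
   at most 1/n.  Throw every stake into one of n bins chosen uniformly and independently:
   each bin receives each stake with probability 1/n, so its load is distributed like the
   total loss, and n P(loss <= 1/n) is the expected number of light bins, those with load
   at most 1/n.  That number is at most n - 1 + [all bins light] - [two bins heavy].
   Fix the bins j, k of the two largest stakes, both larger than the tail r unless the
   sequence is bold play: all bins are light only if {j, k} is the set of bins that the
   other stakes load below 1/n - r, hence for at most two of the n^2 pairs (j, k), and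
   when n >= 4 two further bins give two pairs with two heavy bins.  So
   P(S >= t) <= 1 - 1/n + [n = 3] 2/27, which is the value of bold play for n >= 4 and
   that of the stakes 1/3, 1/3, 1/3 for n = 3. *)

From mathcomp Require Import all_boot all_order all_algebra.
From mathcomp Require Import all_classical all_reals all_analysis.
From mathcomp Require Import zify ring lra.
Set Implicit Arguments. Unset Strict Implicit. Unset Printing Implicit Defensive.
Import Order.TTheory GRing.Theory Num.Theory.
Import numFieldNormedType.Exports.
Local Open Scope ring_scope.

Lemma ler_term_sum (R : numDomainType) (I : finType) (F : I -> R) i :
  (forall j, 0 <= F j) -> F i <= \sum_j F j.
Proof. by move=> F_ge0; rewrite (bigD1 i) //= lerDl sumr_ge0. Qed.

Lemma ler_two_terms_sum (R : numDomainType) (I : finType) (F : I -> R) i i' :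
  (forall j, 0 <= F j) -> i != i' -> F i + F i' <= \sum_j F j.
Proof.
move=> F_ge0 ii'; rewrite (bigD1 i) //= (bigD1 i') /=; last by rewrite eq_sym.
by rewrite addrA lerDl sumr_ge0.
Qed.

Lemma sum_nat_of_bool (R : numDomainType) (I : finType) (P : pred I) :
  \sum_i (P i)%:R = #|[set i | P i]|%:R :> R.
Proof.
rewrite -sum1_card natr_sum [RHS]big_mkcond.
by apply: eq_bigr => i _; rewrite inE; case: (P i).
Qed.

(* The probability that [u] plus the stakes of [ws] that are lost, each independently
   with probability [q], is at most [X]. *)
Fixpoint loss_prob (R : numDomainType) (q X : R) (ws : seq R) (u : R) : R :=
  if ws is w :: ws' then (1 - q) * loss_prob q X ws' u + q * loss_prob q X ws' (u + w)
  else ((u <= X)%R)%:R.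

Section RandomPlacement.
Variables (R : realFieldType) (n : nat).
Hypothesis n_gt0 : (0 < n)%N.

Definition place (U : 'I_n -> R) (w : R) (k : 'I_n) : 'I_n -> R :=
  fun i => U i + (if i == k then w else 0).

(* The mean of [h] over the [n ^ size ws] equally likely ways of adding each stake of
   [ws] to one of the bins with loads [U]. *)
Fixpoint placement_mean (ws : seq R) (U : 'I_n -> R) (h : ('I_n -> R) -> R) : R :=
  if ws is w :: ws' then n%:R^-1 * \sum_(k < n) placement_mean ws' (place U w k) h
  else h U.

Let n_neq0 : n%:R != 0 :> R. Proof. by rewrite pnatr_eq0 -lt0n. Qed.

Lemma sum_place U w k : \sum_i place U w k i = \sum_i U i + w.
Proof. by rewrite big_split /= -big_mkcond big_pred1_eq. Qed.

Lemma sum_split_pred1 (k : 'I_n) (F : bool -> R) :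
  \sum_(i < n) F (i == k) = F true + (n%:R - 1) * F false.
Proof.
rewrite (bigD1 k) //= eqxx; congr (_ + _).
rewrite (eq_bigr (fun _ => F false)); last by move=> i /negbTE ->.
by rewrite sumr_const cardC1 card_ord -[LHS]mulr_natl -subn1 natrB.
Qed.

Lemma placement_mean_light X ws U :
  placement_mean ws U (fun V => \sum_k ((V k <= X)%R)%:R) =
  \sum_k loss_prob n%:R^-1 X ws (U k).
Proof.
elim: ws U => [//|w ws IH] U /=.
under eq_bigr do rewrite IH.
rewrite exchange_big /= mulr_sumr; apply: eq_bigr => k _.
under eq_bigr do rewrite /place eq_sym.
rewrite (sum_split_pred1 k (fun b => loss_prob _ X ws (U k + (if b then w else 0)))) addr0.
by field.
Qed.

Lemma placement_mean_cst ws U c : placement_mean ws U (fun _ => c) = c.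
Proof.
elim: ws U => [//|w ws IH] U /=.
under eq_bigr do rewrite IH.
by rewrite sumr_const card_ord -[c *+ _]mulr_natl mulKf.
Qed.

Lemma placement_meanDl ws U c h :
  placement_mean ws U (fun V => c + h V) = c + placement_mean ws U h.
Proof.
elim: ws U => [//|w ws IH] U /=.
under eq_bigr do rewrite IH.
by rewrite big_split /= sumr_const card_ord -[c *+ _]mulr_natl mulrDr mulKf.
Qed.

Lemma ler_placement_mean ws U h h' :
  (forall V, \sum_k V k = \sum_k U k + \sum_(w <- ws) w -> h V <= h' V) ->
  placement_mean ws U h <= placement_mean ws U h'.
Proof.
elim: ws U => [|w ws IH] U hh' /=.
  by apply: hh'; rewrite big_nil addr0.
rewrite ler_wpM2l ?invr_ge0 ?ler0n // ler_sum // => k _.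
apply: IH => V sumV; apply: hh'.
by rewrite sumV sum_place big_cons addrA.
Qed.

Lemma placement_mean_place_last w ws U h :
  placement_mean (w :: ws) U h =
  placement_mean ws U (fun V => n%:R^-1 * \sum_k h (place V w k)).
Proof.
elim: ws U => [//|w' ws IH] U.
transitivity (n%:R^-1 * \sum_j placement_mean (w :: ws) (place U w' j) h); last first.
  by congr (_ * _); apply: eq_bigr => j _; rewrite IH.
rewrite /= !mulr_sumr.
under eq_bigr do rewrite !mulr_sumr.
under [RHS]eq_bigr do rewrite !mulr_sumr.
rewrite exchange_big /=; apply: eq_bigr => j _; apply: eq_bigr => k _.
congr (_ * (_ * placement_mean _ _ _)).
by apply: boolp.funext => i; rewrite /place addrAC.
Qed.

End RandomPlacement.

Lemma set2_inj (T : finType) (j k k' : T) : [set j; k] = [set j; k'] -> k = k'.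
Proof.
move=> jk_jk'; have : k \in [set j; k'] by rewrite -jk_jk' set22.
rewrite !inE => /orP [/eqP kj | /eqP //].
have : k' \in [set j; k] by rewrite jk_jk' set22.
by rewrite kj !inE orbb => /eqP.
Qed.

Section LightBins.
Variables (R : realFieldType) (n : nat) (X : R).

Definition all_light (U : 'I_n -> R) := [forall i, U i <= X].

Definition two_heavy (U : 'I_n -> R) :=
  [exists i, exists i', [&& i != i', X < U i & X < U i']].

Lemma sum_light_le U :
  \sum_k ((U k <= X)%R)%:R <= n%:R - 1 + (all_light U)%:R - (two_heavy U)%:R :> R.
Proof.
have -> : \sum_k ((U k <= X)%R)%:R = n%:R - \sum_k ((X < U k)%R)%:R :> R.
  apply/eqP; rewrite eq_sym subr_eq -big_split /=.
  rewrite (eq_bigr (fun _ => 1)) ?sumr_const ?card_ord // => k _.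
  by rewrite leNgt; case: (X < U k); rewrite ?add0r ?addr0.
have H_ge0 k : 0 <= ((X < U k)%R)%:R :> R by rewrite ler0n.
have [all_l | ] := boolP (all_light U).
  have -> : two_heavy U = false.
    apply/negbTE/existsP => -[i /existsP [i' /and3P [_ Xi _]]].
    by move/forallP/(_ i): all_l; rewrite leNgt Xi.
  have : 0 <= \sum_k ((X < U k)%R)%:R :> R by apply: sumr_ge0.
  by rewrite /= ?mulr1n ?mulr0n; lra.
rewrite negb_forall => /existsP [i]; rewrite -ltNge => Xi.
have [/existsP [j /existsP [j' /and3P [jj' Xj Xj']]] | _] := boolP (two_heavy U).
  by have := ler_two_terms_sum H_ge0 jj'; rewrite Xj Xj' /=; lra.
by have := ler_term_sum i H_ge0; rewrite Xi /=; lra.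
Qed.

End LightBins.

Section TwoLargeStakes.
Variables (R : realFieldType) (n : nat) (X : R) (V : 'I_n -> R) (x y r : R).
Hypothesis nX : n%:R * X = 1.
Hypothesis r_ge0 : 0 <= r.
Hypothesis r_lt_x : r < x.
Hypothesis r_lt_y : r < y.
Hypothesis sumV : \sum_i V i = 1 - r - x - y.

Definition place2 (j k : 'I_n) := place (place V y j) x k.

Definition low_bins := [set i | V i < X - r].

(* The loads total [1 - r = n X - r], so when no bin exceeds [X] every bin outside
   [{j, k}] already holds at least [X - r]. *)
Lemma low_bins_all_light j k : all_light X (place2 j k) -> low_bins = [set j; k].
Proof.
move=> /forallP light.
have placedE i : i \in [set j; k] -> V i < X - r.
  rewrite !inE => ijk; have := light i; rewrite /place2 /place /=.
  by case/orP: ijk => /eqP ->; rewrite eqxx; case: ifP => _; move: r_ge0 r_lt_x r_lt_y; lra.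
apply/finset.setP => i; rewrite [in LHS]inE; have [/placedE -> // | ijk] := boolP (i \in _).
apply/negbTE; rewrite -leNgt.
have : \sum_i' place2 j k i' = 1 - r by rewrite /place2 !sum_place sumV; ring.
rewrite (bigD1 i) //= {1}/place2 /place.
move: ijk; rewrite !inE negb_or => /andP [/negbTE -> /negbTE ->].
have : \sum_(i' | i' != i) place2 j k i' <= \sum_(i' | i' != i) X by exact: ler_sum.
rewrite sumr_const cardC1 card_ord -[X *+ _]mulr_natl -subn1 natrB; last first.
  exact: leq_ltn_trans (leq0n i) (ltn_ord i).
by move: nX; lra.
Qed.

Lemma two_heavy_place2 a b : a != b -> X - r <= V a -> X - r <= V b ->
  two_heavy X (place2 a b).
Proof.
move=> ab Va Vb; apply/existsP; exists a; apply/existsP; exists b.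
rewrite ab /place2 /place eqxx (negbTE ab) eq_sym (negbTE ab) eqxx.
by apply/andP; split; move: r_lt_x r_lt_y; lra.
Qed.

Let all_light_placements := [set jk : 'I_n * 'I_n | all_light X (place2 jk.1 jk.2)].

Lemma card_all_light_le2 : (#|all_light_placements| <= 2)%N.
Proof.
have [-> | [[j0 k0]]] := set_0Vmem all_light_placements; first by rewrite cards0.
rewrite inE => /low_bins_all_light low_j0k0.
have fst_inj : {in all_light_placements &, injective fst}.
  move=> [j k] [j' k'] /[!inE] /= /low_bins_all_light jk /low_bins_all_light + jj'.
  by subst j' => jk'; rewrite (set2_inj (etrans (esym jk) jk')).
rewrite -(card_in_imset fst_inj); apply: leq_trans (_ : #|low_bins| <= 2)%N.
  apply/subset_leq_card/fintype.subsetP => _ /imsetP [[j k] /[!inE] /low_bins_all_light jk ->].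
  by move: (set21 j k); rewrite -jk inE.
by rewrite low_j0k0 cards2; case: (_ != _).
Qed.

Lemma card_all_light_le_two_heavy : (3 < n)%N ->
  (#|all_light_placements| <=
   #|[set jk : 'I_n * 'I_n | two_heavy X (place2 jk.1 jk.2)]|)%N.
Proof.
move=> n_gt3.
have [-> | [[j0 k0]]] := set_0Vmem all_light_placements; first by rewrite cards0.
rewrite inE => /low_bins_all_light low_j0k0.
have : (1 < #|~: low_bins|)%N.
  have := cardsC low_bins; rewrite low_j0k0 card_ord cards2; case: (_ != _); lia.
move=> /card_gt1P [i1 [i2 [+ + i12]]]; rewrite !inE -!leNgt => Vi1 Vi2.
apply: leq_trans card_all_light_le2 _.
have -> : 2%N = #|[set (i1, i2); (i2, i1)]|.
  by rewrite cards2 xpair_eqE (negbTE i12).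
apply/subset_leq_card/fintype.subsetP => _ /[!inE] /orP [] /eqP -> /=.
  exact: two_heavy_place2.
by apply: two_heavy_place2; rewrite // eq_sym.
Qed.

Lemma sum_place2_light_heavy :
  \sum_j \sum_k ((all_light X (place2 j k))%:R - (two_heavy X (place2 j k))%:R) <=
  (if (3 < n)%N then 0 else 2) :> R.
Proof.
rewrite pair_bigA /= sumrB !sum_nat_of_bool -/all_light_placements.
case: ifP => [/card_all_light_le_two_heavy | _].
  by rewrite subr_le0 ler_nat.
by rewrite lerBlDr -natrD ler_nat; apply: leq_trans card_all_light_le2 (leq_addr _ _).
Qed.

End TwoLargeStakes.

Lemma loss_prob_two_large_le (R : realFieldType) (n : nat) (X x y r : R) (rest : seq R) :
  (2 < n)%N -> n%:R * X = 1 -> 0 <= r -> r < x -> r < y ->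
  x + y + \sum_(w <- rest) w = 1 - r ->
  n%:R * loss_prob n%:R^-1 X (x :: y :: rest) 0 <=
    n%:R - 1 + (if (3 < n)%N then 0 else 2) / n%:R ^+ 2.
Proof.
move=> n_gt2 nX r_ge0 r_lt_x r_lt_y sum_stakes; have n_gt0 : (0 < n)%N by lia.
have -> : n%:R * loss_prob n%:R^-1 X (x :: y :: rest) 0 =
    \sum_(k < n) loss_prob n%:R^-1 X (x :: y :: rest) ((fun=> 0) k).
  by rewrite sumr_const card_ord mulr_natl.
rewrite -(placement_mean_light n_gt0).
pose h (V : 'I_n -> R) := (all_light X V)%:R - (two_heavy X V)%:R :> R.
apply: (@le_trans _ _ (placement_mean (x :: y :: rest) (fun=> 0) (fun V => n%:R - 1 + h V))).
  by apply: ler_placement_mean => V _; rewrite /h addrA; exact: sum_light_le.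
rewrite placement_meanDl // lerD2l !placement_mean_place_last.
rewrite -(placement_mean_cst n_gt0 rest (fun=> 0) (_ / _)).
apply: ler_placement_mean => V; rewrite big1_eq add0r => sumV.
have {}sumV : \sum_i V i = 1 - r - x - y by rewrite sumV; move: sum_stakes; lra.
rewrite -mulr_sumr mulrA -invfM -expr2 mulrC ler_wpM2r ?invr_ge0 ?exprn_ge0 ?ler0n //.
exact: (sum_place2_light_heavy nX r_ge0 r_lt_x r_lt_y sumV).
Qed.

Local Open Scope classical_set_scope.

Fixpoint bernoulli_seq_prob (R : ringType) (p : R) (N : nat) (phi : seq bool -> bool) : R :=
  if N is N'.+1 then
    p * bernoulli_seq_prob p N' (fun e => phi (true :: e)) +
    (1 - p) * bernoulli_seq_prob p N' (fun e => phi (false :: e))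
  else (phi [::])%:R.

Lemma eq_bernoulli_seq_prob (R : ringType) (p : R) N (phi psi : seq bool -> bool) :
  phi =1 psi -> bernoulli_seq_prob p N phi = bernoulli_seq_prob p N psi.
Proof.
elim: N phi psi => [|N IH] phi psi phi_psi /=; first by rewrite phi_psi.
by congr (_ * _ + _ * _); apply: IH => e.
Qed.

Section BernoulliSequence.
Context (R : realType) (d : measure_display) (T : measurableType d)
  (P : probability T R) (p : R) (beta : nat -> T -> R).
Hypothesis beta_bernoulli : forall i, bernoulli_rv P p (beta i).
Hypothesis beta_indep : mutually_independent P beta.

Lemma bernoulli_rv01 i w : beta i w = 0 \/ beta i w = 1.
Proof. by case: (beta_bernoulli i) => _ []. Qed.

Lemma measurable_beta_preimage i B : measurable B -> measurable (beta i @^-1` B).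
Proof. by case: (beta_bernoulli i) => /(_ measurableT B) + _ mB; rewrite setTI; apply. Qed.

Lemma prob_beta1 i : P (beta i @^-1` [set 1]) = p%:E.
Proof. by case: (beta_bernoulli i) => _ []. Qed.

Lemma prob_beta0 i : P (beta i @^-1` [set 0]) = (1 - p)%:E.
Proof.
have -> : beta i @^-1` [set 0] = ~` (beta i @^-1` [set 1]).
  apply/seteqP; split => w /=; first by move=> ->; apply/eqP; rewrite eq_sym oner_eq0.
  by case: (bernoulli_rv01 i w).
by rewrite probability_setC ?prob_beta1 //; apply: measurable_beta_preimage.
Qed.

Definition bits m N w : seq bool := [seq beta i w == 1 | i <- iota m N].

Definition bits_event m N (phi : seq bool -> bool) : set T := [set w | phi (bits m N w)].

Definition outcome (b : bool) : R := if b then 1 else 0.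

Lemma bits_eventS m N phi :
  bits_event m N.+1 phi =
  (beta m @^-1` [set outcome true] `&` bits_event m.+1 N (fun e => phi (true :: e))) `|`
  (beta m @^-1` [set outcome false] `&` bits_event m.+1 N (fun e => phi (false :: e))).
Proof.
apply/seteqP; split => w; rewrite /bits_event /bits /=;
  case: (bernoulli_rv01 m w) => ->; rewrite ?eqxx ?(eq_sym 0) ?oner_eq0 /outcome.
- by right.
- by left.
- by case=> -[] // /esym /eqP; rewrite oner_eq0.
- by case=> -[] // /eqP; rewrite oner_eq0.
Qed.

Lemma measurable_bits_event N m phi : measurable (bits_event m N phi).
Proof.
elim: N m phi => [|N IH] m phi.
  rewrite /bits_event /=; case: (phi [::]).
    by rewrite (_ : [set _ | true] = setT) //; apply/seteqP; split.
  by rewrite (_ : [set _ | false] = set0) //; apply/seteqP; split.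
rewrite bits_eventS.
by apply: measurableU; apply: measurableI => //; exact: measurable_beta_preimage.
Qed.

Definition cylinder (s : seq nat) (B : nat -> set R) : set T :=
  \big[setI/setT]_(i <- s) (beta i @^-1` B i).

Lemma measurable_cylinder s B : (forall i, measurable (B i)) -> measurable (cylinder s B).
Proof.
move=> mB; elim: s => [|i s IH]; rewrite /cylinder ?big_nil ?big_cons //.
by apply: measurableI => //; exact: measurable_beta_preimage.
Qed.

Lemma cylinder_cons m A s B : m \notin s ->
  cylinder (m :: s) (fun i => if i == m then A else B i) = beta m @^-1` A `&` cylinder s B.
Proof.
move=> ms; rewrite /cylinder big_cons eqxx; congr (_ `&` _); apply: eq_big_seq => i i_s.
by case: eqP => // im; move: ms; rewrite -im i_s.
Qed.

Lemma prob_preimageI_cylinder m A s B : m \notin s -> uniq s -> measurable A ->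
  (forall i, measurable (B i)) ->
  P (beta m @^-1` A `&` cylinder s B) = (P (beta m @^-1` A) * P (cylinder s B))%E.
Proof.
move=> ms us mA mB; pose B' i := if i == m then A else B i.
have mB' i : measurable (B' i) by rewrite /B'; case: (i == m).
have ums : uniq (m :: s) by rewrite /= ms.
rewrite -cylinder_cons // [LHS](beta_indep ums mB') big_cons /B' eqxx (beta_indep us mB).
congr (_ * _)%E; apply: eq_big_seq => i i_s.
by case: eqP => // im; move: ms; rewrite -im i_s.
Qed.

Lemma prob_bits_eventI_cylinder N m phi s B : uniq s -> all (fun i => i < m)%N s ->
  (forall i, measurable (B i)) ->
  P (bits_event m N phi `&` cylinder s B) =
  ((bernoulli_seq_prob p N phi)%:E * P (cylinder s B))%E.
Proof.
elim: N m phi s B => [|N IH] m phi s B us s_lt_m mB.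
  rewrite /bits_event /=; case: (phi [::]).
    by rewrite (_ : [set _ | true] = setT) ?setTI ?mul1e //; apply/seteqP; split.
  by rewrite (_ : [set _ | false] = set0) ?set0I ?measure0 ?mul0e //; apply/seteqP; split.
have ms : m \notin s by apply/negP => /(allP s_lt_m); rewrite ltnn.
have step b : P (beta m @^-1` [set outcome b] `&` bits_event m.+1 N (fun e => phi (b :: e))
                 `&` cylinder s B) =
    ((bernoulli_seq_prob p N (fun e => phi (b :: e)))%:E *
     (P (beta m @^-1` [set outcome b]) * P (cylinder s B)))%E.
  rewrite setIAC setIC -cylinder_cons // IH ?cylinder_cons ?prob_preimageI_cylinder //=.
  - by rewrite ms us.
  - by rewrite ltnSn; apply/allP => i /(allP s_lt_m) /ltnW.
  - by move=> i; case: (i == m).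
have fin_cylinder : P (cylinder s B) = (fine (P (cylinder s B)))%:E.
  by rewrite fineK // fin_num_measure //; exact: measurable_cylinder.
have measurable_step b : measurable
    (beta m @^-1` [set outcome b] `&` bits_event m.+1 N (fun e => phi (b :: e))).
  by apply: measurableI; [exact: measurable_beta_preimage | exact: measurable_bits_event].
have mC := measurable_cylinder s mB.
rewrite bits_eventS setIUl measureU; last 3 first.
- exact: measurableI.
- exact: measurableI.
- apply/seteqP; split => // w [[[/= -> _] _] [[/eqP]]].
  by rewrite /outcome oner_eq0.
transitivity ((bernoulli_seq_prob p N (fun e => phi (true :: e)))%:E *
                 (P (beta m @^-1` [set outcome true]) * P (cylinder s B)) +
              (bernoulli_seq_prob p N (fun e => phi (false :: e)))%:E *
                 (P (beta m @^-1` [set outcome false]) * P (cylinder s B)))%E.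
  by congr (_ + _)%E; exact: step.
rewrite prob_beta1 prob_beta0 fin_cylinder -!EFinM -EFinD /=.
by congr (_%:E); ring.
Qed.

Lemma prob_bits_event N phi : P (bits_event 0 N phi) = (bernoulli_seq_prob p N phi)%:E.
Proof.
have := @prob_bits_eventI_cylinder N 0 phi [::] (fun=> setT) isT isT (fun=> measurableT).
by rewrite /cylinder big_nil setIT probability_setT mule1.
Qed.

End BernoulliSequence.

Fixpoint loss (R : nmodType) (ws : seq R) (e : seq bool) : R :=
  match ws, e with
  | w :: ws', b :: e' => (if b then 0 else w) + loss ws' e'
  | _, _ => 0
  end.

Lemma bernoulli_seq_prob_loss (R : numDomainType) (q X : R) ws u :
  bernoulli_seq_prob (1 - q) (size ws) (fun e => (u + loss ws e <= X)%R) = loss_prob q X ws u.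
Proof.
elim: ws u => [|w ws IH] u /=; first by rewrite addr0.
rewrite (_ : 1 - (1 - q) = q); last by ring.
congr (_ * _ + _ * _); rewrite -IH.
  by apply: eq_bernoulli_seq_prob => e /=; rewrite add0r.
by apply: eq_bernoulli_seq_prob => e /=; rewrite addrA.
Qed.

Section StakeSequence.
Variables (R : realType) (c : nat -> R).
Hypothesis c_stake : stake_seq c.

Lemma stake_ge0 i : 0 <= c i.
Proof. by case: c_stake. Qed.

Lemma stake_nonincreasing : nonincreasing_seq c.
Proof. by apply/nonincreasing_seqP; case: c_stake => _ []. Qed.

Lemma nondecreasing_series_stake : nondecreasing_seq (series c).
Proof. by apply: nondecreasing_series => i _ _; exact: stake_ge0. Qed.

Lemma series_stake_le1 M : series c M <= 1.
Proof.
case: c_stake => _ [_ c_sum1].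
rewrite -(cvg_lim _ c_sum1) //; apply: nondecreasing_cvgn_le nondecreasing_series_stake _ _.
exact: cvgP c_sum1.
Qed.

Lemma stake_tail_small e : 0 < e -> exists N, forall M, (N <= M)%N -> 1 - series c M < e.
Proof.
case: c_stake => _ [_ c_sum1] e_gt0.
have [N _ near1] := (cvgrPdist_lt _ _).1 c_sum1 e e_gt0.
by exists N => M NM; apply: le_lt_trans (near1 M NM); exact: ler_norm.
Qed.

End StakeSequence.

Section Success.
Context (R : realType) (d : measure_display) (T : measurableType d)
  (P : probability T R) (p : R) (beta : nat -> T -> R).
Hypothesis beta_bernoulli : forall i, bernoulli_rv P p (beta i).
Hypothesis beta_indep : mutually_independent P beta.

Definition success (c : nat -> R) (t : R) := [set w | t <= S_stake c beta w].

Definition trunc_success (c : nat -> R) (t : R) (M : nat) :=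
  bits_event beta 0 M (fun e => (loss [seq c i | i <- iota 0 M] e <= 1 - t)%R).

Lemma loss_bits c m N w :
  loss [seq c i | i <- iota m N] (bits beta m N w) =
  \sum_(m <= i < m + N) c i * (1 - beta i w).
Proof.
elim: N m => [|N IH] m; first by rewrite addn0 big_geq.
rewrite /= IH [in RHS]big_ltn ?addSnnS; last lia.
by congr (_ + _); case: (bernoulli_rv01 beta_bernoulli m w) => ->;
  rewrite ?eqxx ?(eq_sym 0) ?oner_eq0 ?subrr ?subr0 ?mulr0 ?mulr1.
Qed.

Variable c : nat -> R.
Hypothesis c_stake : stake_seq c.

Section Realization.
Variable w : T.
Let gain i := c i * beta i w.

Lemma gain_ge0 i : 0 <= gain i.
Proof.
by rewrite /gain; case: (bernoulli_rv01 beta_bernoulli i w) => ->;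
  rewrite ?mulr0 ?mulr1 ?stake_ge0.
Qed.

Lemma gain_le_stake i : gain i <= c i.
Proof.
by rewrite /gain; case: (bernoulli_rv01 beta_bernoulli i w) => ->;
  rewrite ?mulr0 ?mulr1 ?stake_ge0.
Qed.

Lemma nondecreasing_series_gain : nondecreasing_seq (series gain).
Proof. by apply: nondecreasing_series => i _ _; exact: gain_ge0. Qed.

Lemma cvgn_series_gain : cvgn (series gain).
Proof.
apply: nondecreasing_is_cvgn; first exact: nondecreasing_series_gain.
exists 1 => _ [M _ <-]; apply: le_trans (series_stake_le1 c_stake M).
by rewrite !seriesEnat ler_sum // => i _; exact: gain_le_stake.
Qed.

Lemma series_gain_le_S_stake M : series gain M <= S_stake c beta w.
Proof. exact: nondecreasing_cvgn_le nondecreasing_series_gain cvgn_series_gain M. Qed.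

Lemma S_stake_le_series_gain M : S_stake c beta w <= series gain M + (1 - series c M).
Proof.
apply: limr_le; first exact: cvgn_series_gain.
exists M => // M' /= MM'; have := series_stake_le1 c_stake M'.
rewrite !seriesEnat /= !(big_cat_nat (leq0n M) MM') /=.
suff : \sum_(M <= i < M') gain i <= \sum_(M <= i < M') c i by lra.
by rewrite ler_sum // => i _; exact: gain_le_stake.
Qed.

Lemma trunc_successE t M :
  trunc_success c t M w <-> t <= series gain M + (1 - series c M).
Proof.
have lossE : \sum_(0 <= i < M) c i * (1 - beta i w) =
    \sum_(0 <= i < M) c i - \sum_(0 <= i < M) gain i.
  by rewrite -sumrB; apply: eq_bigr => i _; rewrite /gain mulrBr mulr1.
rewrite /trunc_success /bits_event /= loss_bits add0n lossE !seriesEnat /=.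
by split; lra.
Qed.

End Realization.

Lemma success_bigcap t : success c t = \bigcap_M trunc_success c t M.
Proof.
apply/seteqP; split => w.
  by move=> tS M _; apply/trunc_successE; apply: le_trans tS _; exact: S_stake_le_series_gain.
move=> trunc_all; rewrite /success /= leNgt; apply/negP => St.
have gap : 0 < t - S_stake c beta w by rewrite subr_gt0.
have [N tail_small] := stake_tail_small c_stake gap.
have /trunc_successE := trunc_all N Logic.I.
have := series_gain_le_S_stake w N; have := tail_small N (leqnn N); lra.
Qed.

Lemma measurable_success t : measurable (success c t).
Proof.
rewrite success_bigcap; apply: bigcapT_measurable => M; exact: measurable_bits_event.
Qed.

Lemma prob_success_le_trunc t M : (P (success c t) <= P (trunc_success c t M))%E.
Proof.
apply: le_measure; rewrite ?inE; [exact: measurable_success | exact: measurable_bits_event |].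
by rewrite success_bigcap => w; apply.
Qed.

Lemma prob_trunc_success q t M : p = 1 - q ->
  P (trunc_success c t M) = (loss_prob q (1 - t) [seq c i | i <- iota 0 M] 0)%:E.
Proof.
move=> pq; rewrite (prob_bits_event beta_bernoulli beta_indep) pq.
rewrite -bernoulli_seq_prob_loss size_map size_iota.
by congr (_%:E); apply: eq_bernoulli_seq_prob => e; rewrite add0r.
Qed.

End Success.

Section FinitelySupportedStakes.
Context {R : realType}.

Lemma series_finite_support (u : nat -> R) M N :
  (forall i, (M <= i)%N -> u i = 0) -> (M <= N)%N -> series u N = series u M.
Proof.
move=> u_supp MN; rewrite !seriesEnat /= (big_cat_nat (leq0n M) MN) /=.
rewrite [X in _ + X](eq_big_nat _ _ (F2 := fun=> 0)) ?big1_eq ?addr0 //.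
by move=> i /andP [Mi _]; exact: u_supp.
Qed.

Lemma lim_series_finite_support (u : nat -> R) M :
  (forall i, (M <= i)%N -> u i = 0) -> series u @ \oo --> series u M.
Proof.
by move=> u_supp; apply: cvg_near_cst; exists M => // N /= MN; exact: series_finite_support.
Qed.

Lemma series_stake_finite_support (c : nat -> R) M : stake_seq c ->
  (forall i, (M <= i)%N -> c i = 0) -> series c M = 1.
Proof.
case=> _ [_ c_sum1] c_supp.
by rewrite -(cvg_lim _ (lim_series_finite_support c_supp)) // (cvg_lim _ c_sum1).
Qed.

Lemma stake_seq_finite_support (c : nat -> R) M :
  (forall i, 0 <= c i) -> (forall i, c i.+1 <= c i) ->
  (forall i, (M <= i)%N -> c i = 0) -> series c M = 1 -> stake_seq c.
Proof.
move=> c_ge0 c_noninc c_supp c_sum1; split=> //; split=> //.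
by rewrite -c_sum1; exact: lim_series_finite_support.
Qed.

Lemma S_stake_finite_support (T : Type) (c : nat -> R) (beta : nat -> T -> R) M w :
  (forall i, (M <= i)%N -> c i = 0) ->
  S_stake c beta w = \sum_(0 <= i < M) c i * beta i w.
Proof.
move=> c_supp; have supp i : (M <= i)%N -> c i * beta i w = 0.
  by move/c_supp ->; rewrite mul0r.
rewrite /S_stake; apply: lim_near_cst => //; exists M => // N /= MN.
by rewrite (series_finite_support supp MN) seriesEnat.
Qed.

Definition bold_play : nat -> R := fun i => if i == 0%N then 1 else 0.

Lemma bold_play_support i : (1 <= i)%N -> bold_play i = 0.
Proof. by rewrite /bold_play; case: i. Qed.

Lemma stake_seq_bold_play : stake_seq bold_play.
Proof.
apply: stake_seq_finite_support bold_play_support _.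
- by move=> [|i]; rewrite /bold_play /= ?ler01.
- by move=> [|i]; rewrite /bold_play /= ?ler01.
- by rewrite seriesEnat /= big_nat1.
Qed.

Lemma stake_seq_eq_bold_play c : stake_seq c -> c 1%N = 0 -> c = bold_play.
Proof.
move=> c_stake c1_0.
have c_supp i : (1 <= i)%N -> c i = 0.
  move=> i_ge1; apply/le_anti; rewrite stake_ge0 // andbT -c1_0.
  exact: stake_nonincreasing.
have := series_stake_finite_support c_stake c_supp; rewrite seriesEnat /= big_nat1 => c0_1.
by apply: boolp.funext => -[|i]; rewrite /bold_play //= c_supp.
Qed.

Definition thirds : nat -> R := fun i => if (i < 3)%N then 3^-1 else 0.

Lemma thirds_support i : (3 <= i)%N -> thirds i = 0.
Proof. by rewrite /thirds leqNgt => /negbTE ->. Qed.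

Lemma stake_seq_thirds : stake_seq thirds.
Proof.
apply: stake_seq_finite_support thirds_support _.
- by move=> i; rewrite /thirds; case: ifP; rewrite ?invr_ge0 ?ler0n.
- move=> i; rewrite /thirds; case: ifP => [i_lt3 | _]; first by rewrite ifT // ltnW.
  by case: ifP; rewrite ?invr_ge0 ?ler0n.
- by rewrite seriesEnat /= big_ltn // big_ltn // big_ltn // big_geq // /thirds /=; lra.
Qed.

End FinitelySupportedStakes.

Lemma subr_inv_nat_itv (R : realFieldType) n : (1 < n)%N -> 0 < 1 - (n%:R : R)^-1 <= 1.
Proof.
move=> n_gt1; have n_gt0 : 0 < n%:R :> R by rewrite ltr0n; lia.
by rewrite subr_gt0 invf_lt1 // ltr1n n_gt1 lerBlDr lerDl invr_ge0 ltW.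
Qed.

Section OptimalStakes.
Context (R : realType) (d : measure_display) (T : measurableType d)
  (P : probability T R) (p : R) (beta : nat -> T -> R).
Hypothesis beta_bernoulli : forall i, bernoulli_rv P p (beta i).
Hypothesis beta_indep : mutually_independent P beta.

Lemma pi_stake_attained (c0 : nat -> R) t : stake_seq c0 ->
  (forall c, stake_seq c -> (P (success beta c t) <= P (success beta c0 t))%E) ->
  pi_stake P beta t = P (success beta c0 t).
Proof.
move=> c0_stake c0_max; apply/eqP; rewrite eq_le; apply/andP; split.
  by apply: ge_ereal_sup => _ [c c_stake <-]; exact: c0_max.
by apply: ereal_sup_ubound; exists c0.
Qed.

Lemma prob_success_bold_play t : 0 < t <= 1 -> P (success beta bold_play t) = p%:E.
Proof.
move=> /andP [t_gt0 t_le1].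
rewrite -(prob_beta1 beta_bernoulli 0); congr (P _); apply/seteqP.
split => w; rewrite /success /= (S_stake_finite_support _ _ bold_play_support) big_nat1;
  rewrite /bold_play /= mul1r.
  by case: (bernoulli_rv01 beta_bernoulli 0 w) => ->; rewrite // leNgt t_gt0.
by move=> ->.
Qed.

Lemma success_thirds t :
  success beta thirds t = [set w | t <= 3^-1 * beta 0%N w + 3^-1 * beta 1%N w + 3^-1 * beta 2%N w].
Proof.
apply/seteqP; split => w; rewrite /success /= (S_stake_finite_support _ _ thirds_support);
  by rewrite big_ltn // big_ltn // big_ltn // big_geq // addr0 addrA.
Qed.

Lemma success_finite_support c M t : stake_seq c -> (forall i, (M <= i)%N -> c i = 0) ->
  success beta c t = trunc_success beta c t M.
Proof.
move=> c_stake c_supp; have c_sum1 := series_stake_finite_support c_stake c_supp.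
have SE w : S_stake c beta w = series (fun i => c i * beta i w) M.
  by rewrite (S_stake_finite_support _ _ c_supp) seriesEnat.
apply/seteqP; split => w.
  move=> tS; apply/(trunc_successE beta_bernoulli).
  by move: tS; rewrite /success /= SE c_sum1 subrr addr0.
by move/(trunc_successE beta_bernoulli); rewrite /success /= SE c_sum1 subrr addr0.
Qed.

Lemma prob_success_thirds : p = 1 - 3^-1 ->
  P (success beta thirds (1 - 3^-1)) = (20 / 27)%:E.
Proof.
move=> pE.
rewrite (success_finite_support _ stake_seq_thirds thirds_support).
rewrite (prob_trunc_success beta_bernoulli beta_indep _ _ _ pE) /thirds /=.
have third_gt0 : 0 < 3^-1 :> R by rewrite invr_gt0 ltr0n.
rewrite (_ : 1 - (1 - 3^-1) = 3^-1); last by ring.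
rewrite !add0r ltW // lexx.
have -> : (3^-1 + 3^-1 <= 3^-1 :> R) = false by apply/negbTE; rewrite -ltNge; lra.
have -> : (3^-1 + 3^-1 + 3^-1 <= 3^-1 :> R) = false by apply/negbTE; rewrite -ltNge; lra.
by congr (_%:E); rewrite /= ?mulr1n ?mulr0n; field.
Qed.

Lemma prob_success_le n c : stake_seq c -> (2 < n)%N -> p = 1 - n%:R^-1 ->
  (P (success beta c (1 - n%:R^-1)) <=
   (1 - n%:R^-1 + (if (3 < n)%N then 0 else 2) / n%:R ^+ 3)%:E)%E.
Proof.
move=> c_stake n_gt2 pE; set b : R := if (3 < n)%N then 0 else 2.
have n_gt0 : 0 < n%:R :> R by rewrite ltr0n; lia.
have b_ge0 : 0 <= b by rewrite /b; case: ifP.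
have [c1_0 | c1_neq0] := eqVneq (c 1%N) 0.
  rewrite (stake_seq_eq_bold_play c_stake c1_0) prob_success_bold_play; last first.
    by apply: subr_inv_nat_itv; lia.
  by rewrite pE lee_fin lerDl divr_ge0 // exprn_ge0 // ltW.
have c1_gt0 : 0 < c 1%N by rewrite lt_def c1_neq0 stake_ge0.
have [N tail_small] := stake_tail_small c_stake c1_gt0.
apply: le_trans (prob_success_le_trunc beta_bernoulli c_stake _ N.+2) _.
rewrite (prob_trunc_success beta_bernoulli beta_indep _ _ _ pE) lee_fin.
rewrite (_ : 1 - (1 - n%:R^-1) = n%:R^-1); last by ring.
set r := 1 - series c N.+2.
have nX : n%:R * n%:R^-1 = 1 :> R by rewrite mulfV ?gt_eqF.
have r_ge0 : 0 <= r by rewrite subr_ge0 series_stake_le1.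
have r_lt_c1 : r < c 1%N by apply: tail_small; lia.
have r_lt_c0 : r < c 0%N.
  by apply: lt_le_trans r_lt_c1 _; exact: stake_nonincreasing.
have sum_stakes : c 0%N + c 1%N + \sum_(w <- [seq c i | i <- iota 2 N]) w = 1 - r.
  by rewrite /r big_map seriesEnat /= big_ltn // big_ltn // /index_iota !subSS subn0; ring.
have scaleE : n%:R * (1 - n%:R^-1 + b / n%:R ^+ 3) = n%:R - 1 + b / n%:R ^+ 2.
  by field; rewrite gt_eqF.
rewrite -(ler_pM2l n_gt0) scaleE.
exact: loss_prob_two_large_le n_gt2 nX r_ge0 r_lt_c0 r_lt_c1 sum_stakes.
Qed.

End OptimalStakes.

Theorem proposition13 (R : realType) (d : measure_display) (T : measurableType d)
  (P : probability T R) (beta : nat -> T -> R) (k : nat) :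
  (0 < k)%N ->
  iid_bernoulli P ((k%:R + 1) / (k%:R + 2)) beta ->
  ((1 < k)%N ->
     pi_stake P beta ((k%:R + 1) / (k%:R + 2)) = ((k%:R + 1) / (k%:R + 2))%:E) /\
  (k = 1%N ->
     pi_stake P beta ((k%:R + 1) / (k%:R + 2)) =
     P [set w | 2 / 3 <= 3^-1 * beta 0%N w + 3^-1 * beta 1%N w + 3^-1 * beta 2%N w]).
Proof.
move=> _.
have -> : (k%:R + 1) / (k%:R + 2) = 1 - (k.+2)%:R^-1 :> R.
  by rewrite -addn2 natrD; field; rewrite -natrD pnatr_eq0.
move=> [beta_bernoulli beta_indep].
have bound c := prob_success_le beta_bernoulli beta_indep (n := k.+2) c.
split=> [k_gt1 | k1].
  have t_itv : 0 < 1 - (k.+2%:R : R)^-1 <= 1 by apply: subr_inv_nat_itv.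
  rewrite (pi_stake_attained stake_seq_bold_play) (prob_success_bold_play beta_bernoulli t_itv) //.
  move=> c c_stake.
  by apply: le_trans (bound c c_stake (ltnW k_gt1) erefl) _; rewrite ifT ?mul0r ?addr0.
subst k; rewrite (_ : 2 / 3 = 1 - 3^-1); last by field.
rewrite -success_thirds (pi_stake_attained stake_seq_thirds) => // c c_stake.
rewrite (prob_success_thirds beta_bernoulli beta_indep) //.
apply: le_trans (bound c c_stake isT erefl) _.
by rewrite lee_fin /=; lra.
Qed.
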